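(* For any simple undirected graph $G$ with $n$ vertices and $m$ edges, $$n_G(\mathcal{L}_4)=m-n\langle k^2\rangle+\mu_1-\mu_2,\qquad \mu_1=\frac12\sum_{st\in E}(\xi(s)+\xi(t)),\quad \mu_2=\sum_{st\in E}|c(s,t)|.$$
   Context: $k_x$ degree of $x$, $\langle k^2\rangle=\frac1n\sum_xk_x^2$, $\Gamma(x)$ neighbourhood, $\xi(s)=\sum_{t\in\Gamma(s)}k_t$, $c(s,t)=\Gamma(s)\cap\Gamma(t)$. $\mathcal{L}_4$ is the path on 4 vertices; $n_G(F)$ counts (not necessarily induced) subgraphs isomorphic to $F$. *)

From mathcomp Require Import all_boot all_order all_algebra.
Set Implicit Arguments. Unset Strict Implicit. Unset Printing Implicit Defensive.
Import Order.TTheory GRing.Theory Num.Theory.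
Local Open Scope ring_scope.

Definition simple_graph (n : nat) (e : rel 'I_n) : Prop :=
  symmetric e /\ irreflexive e.

Definition edges (n : nat) (e : rel 'I_n) : {set 'I_n * 'I_n} :=
  [set p : 'I_n * 'I_n | (p.1 < p.2)%N && e p.1 p.2].

Definition nedges (n : nat) (e : rel 'I_n) : nat := #|edges e|.

Definition nbhd (n : nat) (e : rel 'I_n) (x : 'I_n) : {set 'I_n} := [set y | e x y].
Definition deg (n : nat) (e : rel 'I_n) (x : 'I_n) : nat := #|nbhd e x|.

Definition avg_k2 (n : nat) (e : rel 'I_n) : rat :=
  (n%:R)^-1 * \sum_(x : 'I_n) ((deg e x)%:R) ^+ 2.

Definition xi (n : nat) (e : rel 'I_n) (s : 'I_n) : nat :=
  (\sum_(t in nbhd e s) deg e t)%N.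

Definition common (n : nat) (e : rel 'I_n) (s t : 'I_n) : {set 'I_n} :=
  nbhd e s :&: nbhd e t.

Definition mu1 (n : nat) (e : rel 'I_n) : rat :=
  2^-1 * \sum_(p in edges e) ((xi e p.1)%:R + (xi e p.2)%:R).

Definition mu2 (n : nat) (e : rel 'I_n) : rat :=
  \sum_(p in edges e) (#|common e p.1 p.2|)%:R.

(* Copies of the path L_4 in G: a (not necessarily induced) subgraph
   isomorphic to L_4 is determined by its edge set (L_4 has no isolated
   vertices); it is the image of an injective map f : 'I_4 -> 'I_n with
   f 0 ~ f 1 ~ f 2 ~ f 3, the edges being 2-element vertex sets. *)
Definition is_L4_embedding (n : nat) (e : rel 'I_n) (f : {ffun 'I_4 -> 'I_n}) : bool :=
  injectiveb f && [forall i : 'I_3, e (f (widen_ord (leqnSn 3) i)) (f (lift ord0 i))].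

Definition L4_edgeset (n : nat) (f : {ffun 'I_4 -> 'I_n}) : {set {set 'I_n}} :=
  [set [set f (widen_ord (leqnSn 3) i); f (lift ord0 i)] | i : 'I_3].

Definition L4_copies (n : nat) (e : rel 'I_n) : {set {set {set 'I_n}}} :=
  [set L4_edgeset f | f in [pred f | is_L4_embedding e f]].

Definition nL4 (n : nat) (e : rel 'I_n) : nat := #|L4_copies e|.

From mathcomp Require Import all_boot all_order all_algebra zify lra.
Set Implicit Arguments. Unset Strict Implicit. Unset Printing Implicit Defensive.
Import GRing.Theory Num.Theory.

(* Count the embeddings a-b-c-d of L_4, i.e. injective walks of length 3, in
   two ways.  The only automorphisms of the path 0-1-2-3 are the identity and
   the reversal, so every copy of L_4 is the edge set of exactly two
   embeddings.  Grouping the embeddings by their middle arc (b, c), the ends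
   (a, d) range over (Gamma(b) \ c) x (Gamma(c) \ b) off the diagonal, and the
   diagonal is c(b, c); so there are (k_b - 1)(k_c - 1) - |c(b, c)| of them.
   Summing over the 2m arcs, sum k_b k_c = sum_b k_b xi(b) = 2 mu_1,
   sum (k_b + k_c) = 2 n <k^2>, sum 1 = 2m and sum |c(b, c)| = 2 mu_2. *)

Definition path_adj (i j : nat) : bool := (i.+1 == j) || (j.+1 == i).

Lemma path4_automorphism_nat (a b c d : nat) :
  all (gtn 4) [:: a; b; c; d] -> uniq [:: a; b; c; d] ->
  [&& path_adj a b, path_adj b c & path_adj c d] ->
  ([:: a; b; c; d] == [:: 0; 1; 2; 3]) || ([:: a; b; c; d] == [:: 3; 2; 1; 0]).
Proof.
by case: a => [|[|[|[|a]]]]; case: b => [|[|[|[|b]]]];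
   case: c => [|[|[|[|c]]]]; case: d => [|[|[|[|d]]]].
Qed.

Lemma path4_automorphism (s : 'I_4 -> 'I_4) : injective s ->
    (forall i : 'I_3, path_adj (s (widen_ord (leqnSn 3) i)) (s (lift ord0 i))) ->
  s =1 id \/ s =1 (@rev_ord 4).
Proof.
move=> s_inj s_adj.
pose k (i : nat) : nat := s (inord i).
have sE (i : 'I_4) : val (s i) = k i by rewrite /k inord_val.
have adj_k (i : nat) : i < 3 -> path_adj (k i) (k i.+1).
  move=> lt_i3; have := s_adj (Ordinal lt_i3).
  by rewrite !sE /= /bump leq0n.
have uniq_k : uniq [:: k 0; k 1; k 2; k 3].
  rewrite -[[:: _; _; _; _]]/(map k (iota 0 4)) (map_inj_in_uniq _) ?iota_uniq //.
  move=> i j; rewrite !mem_iota /= => lt_i4 lt_j4 /val_inj/s_inj/(congr1 val) /=.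
  by rewrite !inordK.
have lt_k : all (gtn 4) [:: k 0; k 1; k 2; k 3] by rewrite /= /k !ltn_ord.
have := path4_automorphism_nat lt_k uniq_k.
rewrite adj_k // adj_k // adj_k // => /(_ isT) /orP[] /eqP [k0 k1 k2 k3];
  [left | right] => i; apply/val_inj; rewrite sE /=;
  by case: i => -[|[|[|[|i]]]].
Qed.

Lemma rev_ord_widen (m : nat) (i : 'I_m) :
  rev_ord (widen_ord (leqnSn m) i) = lift ord0 (rev_ord i).
Proof. by apply/val_inj; rewrite /= /bump /=; have := ltn_ord i; lia. Qed.

Lemma rev_ord_lift (m : nat) (i : 'I_m) :
  rev_ord (lift ord0 i) = widen_ord (leqnSn m) (rev_ord i).
Proof. by apply/val_inj; rewrite /= /bump /=; have := ltn_ord i; lia. Qed.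

Section L4Embeddings.

Variable n : nat.
Implicit Types f g : {ffun 'I_4 -> 'I_n}.

Definition frev f : {ffun 'I_4 -> 'I_n} := [ffun i => f (rev_ord i)].

Lemma L4_edgeset_frev f : L4_edgeset (frev f) = L4_edgeset f.
Proof.
apply/setP=> X; apply/imsetP/imsetP=> -[i _ ->].
  by exists (rev_ord i); rewrite // !ffunE rev_ord_widen rev_ord_lift setUC.
exists (rev_ord i) => //.
by rewrite !ffunE rev_ord_widen rev_ord_lift rev_ordK setUC.
Qed.

Lemma L4_edgeset_codom f X x : X \in L4_edgeset f -> x \in X -> x \in codom f.
Proof. by case/imsetP=> i _ -> /set2P[] ->; apply: codom_f. Qed.

Lemma L4_edgeset_cover f (k : 'I_4) : exists2 X, X \in L4_edgeset f & f k \in X.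
Proof.
have [lt_k3 | ge_k3] := ltnP k 3.
  pose i := Ordinal lt_k3.
  exists [set f (widen_ord (leqnSn 3) i); f (lift ord0 i)]; first exact: imset_f.
  by rewrite (_ : widen_ord _ _ = k) ?set21 //; apply/val_inj.
exists [set f (widen_ord (leqnSn 3) ord_max); f (lift ord0 (@ord_max 2))].
  exact: imset_f.
rewrite (_ : lift _ _ = k) ?set22 //; apply/val_inj; rewrite /= /bump /=.
by have := ltn_ord k; lia.
Qed.

Lemma L4_edgeset_path_adj f (i j : 'I_4) :
  injective f -> [set f i; f j] \in L4_edgeset f -> path_adj i j.
Proof.
move=> f_inj /imsetP[k _ Eij].
have mem_k (x : 'I_4) : (f x \in [set f i; f j]) =
                      (f x \in [set f (widen_ord (leqnSn 3) k); f (lift ord0 k)]).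
  by rewrite Eij.
have := mem_k i; have := mem_k j; have := mem_k (widen_ord (leqnSn 3) k).
have := mem_k (lift ord0 k); rewrite !inE !(inj_eq f_inj) !eqxx ?orbT.
rewrite -!(inj_eq val_inj) /= /bump /= /path_adj; lia.
Qed.

Lemma L4_edgeset_inj f g : injective f -> injective g ->
  L4_edgeset g = L4_edgeset f -> g = f \/ g = frev f.
Proof.
move=> f_inj g_inj Egf.
have /fin_all_exists[s gE] (k : 'I_4) : exists i, g k = f i.
  have [X Xg gkX] := L4_edgeset_cover g k.
  by apply/codomP; apply: L4_edgeset_codom gkX; rewrite -Egf.
have s_inj : injective s by move=> i j /(congr1 f); rewrite -!gE => /g_inj.
have s_adj (i : 'I_3) : path_adj (s (widen_ord (leqnSn 3) i)) (s (lift ord0 i)).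
  by apply: (L4_edgeset_path_adj f_inj); rewrite -!gE -Egf; apply: imset_f.
by case: (path4_automorphism s_inj s_adj) => sE; [left | right];
   apply/ffunP => k; rewrite gE sE ?ffunE.
Qed.

Lemma frev_neq f : injective f -> frev f != f.
Proof. by move=> f_inj; apply/eqP => /ffunP/(_ ord0); rewrite ffunE => /f_inj. Qed.

Variable e : rel 'I_n.
Hypothesis e_sym : symmetric e.

Lemma is_L4_embedding_frev f : is_L4_embedding e f -> is_L4_embedding e (frev f).
Proof.
case/andP=> /injectiveP f_inj /forallP f_adj; apply/andP; split.
  by apply/injectiveP => i j; rewrite !ffunE => /f_inj/rev_ord_inj.
apply/forallP => i; have := f_adj (rev_ord i).
by rewrite !ffunE e_sym -rev_ord_widen -rev_ord_lift.
Qed.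

Lemma card_L4_embeddings : #|[set f | is_L4_embedding e f]| = (2 * nL4 e)%N.
Proof.
set Emb := [set f | is_L4_embedding e f].
rewrite /nL4 (_ : L4_copies e = @L4_edgeset n @: Emb); last first.
  by apply/setP => X; apply/imsetP/imsetP => -[f Ef ->];
     exists f; rewrite ?inE in Ef *.
rewrite -sum1_card (partition_big_imset (@L4_edgeset n)) /= mulnC -sum_nat_const.
apply: eq_bigr => X /imsetP[f]; rewrite inE => Ef ->.
rewrite sum1dep_card.
have f_inj : injective f by case/andP: Ef => /injectiveP.
suff -> : [set g in Emb | L4_edgeset g == L4_edgeset f] = [set f; frev f].
  by rewrite cards2 eq_sym frev_neq.
apply/setP => g; rewrite !inE; apply/andP/orP => [[Eg /eqP EL] | ].
  have g_inj : injective g by case/andP: Eg => /injectiveP.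
  by case: (L4_edgeset_inj f_inj g_inj EL) => ->; [left | right].
by case=> /eqP ->; rewrite ?L4_edgeset_frev ?is_L4_embedding_frev.
Qed.

End L4Embeddings.

Section Walks.

Variable n : nat.
Implicit Types (a b c d : 'I_n) (f : {ffun 'I_4 -> 'I_n}).

Definition walk a b c d : {ffun 'I_4 -> 'I_n} :=
  [ffun i : 'I_4 => nth a [:: a; b; c; d] i].

Lemma walk_inord a b c d k :
  k < 4 -> walk a b c d (inord k) = nth a [:: a; b; c; d] k.
Proof. by move=> lt_k4; rewrite ffunE inordK. Qed.

Lemma walk_eta f : f = walk (f (inord 0)) (f (inord 1)) (f (inord 2)) (f (inord 3)).
Proof.
apply/ffunP => i; rewrite ffunE; case: i => -[|[|[|[|i]]]] lt_i4 //=;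
  by rewrite (_ : inord _ = Ordinal lt_i4) //; apply/val_inj; rewrite /= inordK.
Qed.

Lemma codom_walk a b c d : codom (walk a b c d) = [:: a; b; c; d].
Proof.
rewrite /codom /image_mem (eq_map (fun i => ffunE _ i)) /=.
by rewrite -[map _ _]/(map (nth a _ \o val) _) map_comp val_enum_ord.
Qed.

Variable e : rel 'I_n.

Lemma is_L4_embedding_walk a b c d : is_L4_embedding e (walk a b c d) =
  uniq [:: a; b; c; d] && [&& e a b, e b c & e c d].
Proof.
rewrite /is_L4_embedding /injectiveb /dinjectiveb -[map _ _]/(codom _) codom_walk.
congr (_ && _); apply/forallP/and3P => [adj | [ab bc cd] [[|[|[|i]]] lt_i3]].
  by split; [have := adj ord0 | have := adj (inord 1) | have := adj (inord 2)];
     rewrite !ffunE /= ?inordK.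
all: by rewrite !ffunE.
Qed.

Definition path_ends b c : {set 'I_n * 'I_n} :=
  [set p | is_L4_embedding e (walk p.1 b c p.2)].

Lemma card_L4_embeddings_middle :
  #|[set f | is_L4_embedding e f]| = (\sum_b \sum_c #|path_ends b c|)%N.
Proof.
rewrite -sum1_card (partition_big (fun f => (f (inord 1), f (inord 2))) xpredT) //=.
rewrite pair_bigA; apply: eq_bigr => -[b c] _ /=; rewrite sum1dep_card.
have walk_inj : injective (fun p : 'I_n * 'I_n => walk p.1 b c p.2).
  move=> [a d] [a' d'] /= E.
  by have := congr1 (fun f => (f (inord 0), f (inord 3))) E; rewrite /= !walk_inord.
rewrite -(card_imset _ walk_inj); apply: eq_card => f; rewrite !inE.
apply/andP/imsetP => [[Ef /eqP [<- <-]] | [p Ep ->]].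
  by exists (f (inord 0), f (inord 3)); rewrite ?inE -?walk_eta.
by move: Ep; rewrite inE !walk_inord.
Qed.

Hypothesis e_sym : symmetric e.
Hypothesis e_irr : irreflexive e.

Lemma card_path_ends b c : e b c ->
  (#|path_ends b c| + #|common e b c| = (deg e b).-1 * (deg e c).-1)%N.
Proof.
move=> bc.
have adj_neq x y : e x y -> (x == y) = false.
  by move=> xy; apply: contraTF xy => /eqP ->; rewrite e_irr.
set A := setX (nbhd e b :\ c) (nbhd e c :\ b).
set D := [set p : 'I_n * 'I_n | p.1 == p.2].
have -> : path_ends b c = A :\: D.
  apply/setP => -[a d]; rewrite !inE is_L4_embedding_walk /= !inE bc (e_sym a b).
  have [ba | ab] := boolP (e b a); last by rewrite !andbF.
  have [cd | dc] := boolP (e c d); last by rewrite !andbF.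
  rewrite eq_sym (adj_neq _ _ ba) (adj_neq _ _ bc) (adj_neq _ _ cd) (eq_sym d b) /=.
  by rewrite !andbT; case: (a == c); case: (a == d); case: (b == d).
have -> : #|common e b c| = #|A :&: D|.
  have diag_inj : injective (fun x : 'I_n => (x, x)) by move=> x y [].
  rewrite -(card_imset _ diag_inj).
  apply: eq_card => -[x y]; rewrite !inE /=; apply/imsetP/idP => [[z] | ].
    rewrite !inE => /andP[bz cz] [-> ->].
    by rewrite eqxx bz cz eq_sym (adj_neq _ _ cz) eq_sym (adj_neq _ _ bz).
  case/andP=> /andP[/andP[_ bx] /andP[_ cy]] /eqP xy; subst y.
  by exists x; rewrite ?inE ?bx ?cy.
rewrite addnC cardsID cardsX /deg (cardsD1 c (nbhd e b)) (cardsD1 b (nbhd e c)).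
by rewrite !inE bc e_sym bc.
Qed.

End Walks.

Section DegreeSums.

Variables (n : nat) (e : rel 'I_n).
Hypothesis e_sym : symmetric e.
Hypothesis e_irr : irreflexive e.

Lemma sum_edges_arcs (F : 'I_n -> 'I_n -> nat) :
  \sum_(p in edges e) (F p.1 p.2 + F p.2 p.1) = \sum_b \sum_(c | e b c) F b c.
Proof.
have edges_sum G : \sum_(p in edges e) G p.1 p.2 =
    \sum_(b : 'I_n) \sum_(c : 'I_n) (if (b < c) && e b c then G b c else 0).
  rewrite pair_bigA big_mkcond /=; apply: eq_bigr => -[b c] _; by rewrite inE.
rewrite big_split /= edges_sum (edges_sum (fun x y => F y x)).
rewrite [X in _ + X]exchange_big -big_split /=.
apply: eq_bigr => b _; rewrite -big_split [RHS]big_mkcond; apply: eq_bigr => c _.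
by rewrite (e_sym c b); case: ltngtP => [_|_|/val_inj ->]; rewrite ?e_irr //= ?addn0.
Qed.

Lemma sum_arcsC (F : 'I_n -> 'I_n -> nat) :
  \sum_b \sum_(c | e b c) F b c = \sum_b \sum_(c | e b c) F c b.
Proof.
under eq_bigr do rewrite big_mkcond; rewrite exchange_big.
apply: eq_bigr => b _; rewrite [RHS]big_mkcond.
by apply: eq_bigr => c _; rewrite e_sym.
Qed.

Lemma sum_arcs_deg : \sum_b \sum_(c | e b c) deg e b = \sum_b deg e b ^ 2.
Proof. by apply: eq_bigr => b _; rewrite sum_nat_const -cardsE. Qed.

Lemma sum_arcs_deg_mul :
  \sum_b \sum_(c | e b c) deg e b * deg e c = \sum_b \sum_(c | e b c) xi e b.
Proof.
apply: eq_bigr => b _; rewrite -big_distrr sum_nat_const -cardsE /xi.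
by congr (_ * _); apply: eq_bigl => c; rewrite inE.
Qed.

Lemma L4_count :
  2 * nL4 e + 2 * \sum_(p in edges e) #|common e p.1 p.2| + 2 * \sum_x deg e x ^ 2
  = \sum_(p in edges e) (xi e p.1 + xi e p.2) + 2 * nedges e.
Proof.
have arc_count b c : e b c ->
      #|path_ends e b c| + #|common e b c| + (deg e b + deg e c)
    = deg e b * deg e c + 1.
  move=> bc; rewrite (card_path_ends e_sym e_irr bc).
  have : 0 < deg e b by rewrite /deg (cardsD1 c) inE bc.
  have : 0 < deg e c by rewrite /deg (cardsD1 b) inE e_sym bc.
  nia.
have pathsE : 2 * nL4 e = \sum_b \sum_(c | e b c) #|path_ends e b c|.
  rewrite -card_L4_embeddings // card_L4_embeddings_middle.
  apply: eq_bigr => b _; rewrite [LHS](bigID (e b)) /=.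
  rewrite [X in _ + X]big1 ?addn0 // => c bc.
  apply/eqP; rewrite cards_eq0; apply/eqP/setP => p.
  by rewrite !inE is_L4_embedding_walk (negbTE bc) !andbF.
have commonE : 2 * \sum_(p in edges e) #|common e p.1 p.2| =
               \sum_b \sum_(c | e b c) #|common e b c|.
  rewrite -sum_edges_arcs big_distrr; apply: eq_bigr => p _.
  by rewrite /common (setIC (nbhd e p.2)) addnn -mul2n.
have degE : 2 * \sum_x deg e x ^ 2 =
            \sum_b \sum_(c | e b c) deg e b + \sum_b \sum_(c | e b c) deg e c.
  by rewrite mul2n -addnn -sum_arcs_deg (sum_arcsC (fun b _ => deg e b)).
have xiE : \sum_(p in edges e) (xi e p.1 + xi e p.2) =
           \sum_b \sum_(c | e b c) deg e b * deg e c.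
  by rewrite (sum_edges_arcs (fun b _ => xi e b)) sum_arcs_deg_mul.
have edgesE : 2 * nedges e = \sum_b \sum_(c | e b c) 1.
  by rewrite /nedges -sum1_card big_distrr -sum_edges_arcs.
rewrite pathsE commonE degE xiE edgesE -!big_split; apply: eq_bigr => b _.
rewrite -!big_split; apply: eq_bigr => c bc /=.
by rewrite -arc_count // !addnA.
Qed.

End DegreeSums.

Local Open Scope ring_scope.

Lemma mulr_avg_k2 (n : nat) (e : rel 'I_n) :
  n%:R * avg_k2 e = \sum_x ((deg e x)%:R) ^+ 2.
Proof.
rewrite /avg_k2 mulrA; have [n0 | n_gt0] := posnP n.
  by subst n; rewrite big_ord0 mulr0.
by rewrite mulfV ?mul1r // pnatr_eq0 -lt0n n_gt0.
Qed.

Theorem proposition12 (n : nat) (e : rel 'I_n) :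
  simple_graph e ->
  ((nL4 e)%:R : rat) =
    (nedges e)%:R - n%:R * avg_k2 e + mu1 e - mu2 e.
Proof.
case=> e_sym e_irr.
have /eqP := L4_count e_sym e_irr; rewrite -(eqr_nat rat) => /eqP.
rewrite !(natrM, natrD) !natr_sum (eq_bigr _ (fun p _ => natrD _ _ _)).
rewrite (eq_bigr _ (fun x _ => natrX _ _ _)) mulr_avg_k2 /mu1 /mu2.
lra.
Qed.
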